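(* Suppose $f:\overline{\mathcal{G}}\to\mathbb{R}$ is harmonic and $c$ is a regular value of $f$. Assume there is no $x\in\partial\overline{\mathcal{G}}$ with $f(x)=c$. Then $f^{-1}(c)$ is a finite set.
   Context: $\mathcal{G}$ is a connected, locally finite metric graph with countable vertex set and countable edge set. Each edge has a positive length and is identified with an interval. $\mathcal{G}$ carries the geodesic distance, and $\overline{\mathcal{G}}$ is its metric completion. A designated set of vertices, containing all vertices of degree $1$, forms the boundary vertices. $\mathcal{G}_{int}$ is $\mathcal{G}$ minus the boundary vertices, and $\partial\overline{\mathcal{G}}=\overline{\mathcal{G}}\setminus\mathcal{G}_{int}$. Standing assumptions: $\overline{\mathcal{G}}$ is compact and $\partial\overline{\mathcal{G}}$ is totally disconnected. A function $f:\overline{\mathcal{G}}\to\mathbb{R}$ is harmonic if it is continuous, linear on each edge, and satisfies $\sum_{e\sim v}\partial_\nu f_e(v)=0$ at every interior vertex $v$, where $\partial_\nu f_e(v)$ is the derivative of $f_e$ at $v$ in the direction from $v$ into the edge $e$. A point $x\in\mathcal{G}$ is a critical point of $f$ if $x$ is a vertex or $f'(x)=0$. A number is a critical value if its preimage contains a critical point. Values in the range of $f$ that are not critical values are regular values. *)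

From HB Require Import structures.
From mathcomp Require Import all_boot all_order all_algebra.
From mathcomp Require Import all_classical all_reals all_analysis.
Set Implicit Arguments. Unset Strict Implicit. Unset Printing Implicit Defensive.
Import Order.TTheory GRing.Theory Num.Theory.
Import numFieldNormedType.Exports.
Local Open Scope classical_set_scope.
Local Open Scope ring_scope.

(* Combinatorial data of a metric graph: countable vertex and edge sets,
   each edge e is identified with the interval [0, len e], its endpoint 0
   being the vertex [src e] and its endpoint [len e] being [tgt e]. *)
Record mgraph (R : realType) := MGraph {
  vert : countType;
  edge : countType;
  src : edge -> vert;
  tgt : edge -> vert;
  len : edge -> R }.

Section MetricGraph.
Variable R : realType.
Variable G : mgraph R.
Local Notation V := (vert G).
Local Notation E := (edge G).

Definition incident (v : V) : set E := [set e | src e = v \/ tgt e = v].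

Definition mg_degree (v : V) : nat :=
  (\sum_(e \in incident v) ((src e == v) + (tgt e == v))%N)%R.

Definition pos_lengths : Prop := forall e : E, 0 < len e.
Definition locally_finite : Prop := forall v, finite_set (incident v).

(* Walks: a vertex a and a sequence of (edge, direction) pairs; direction
   true = traverse from src to tgt. [walk_end a w] is the final vertex, or
   None if w is not a walk starting at a. *)
Fixpoint walk_end (a : V) (w : seq (E * bool)) : option V :=
  match w with
  | [::] => Some a
  | (e, b) :: w' =>
      if (if b then src e else tgt e) == a
      then walk_end (if b then tgt e else src e) w'
      else None
  end.

Definition walk_len (w : seq (E * bool)) : R := \sum_(p <- w) len (p.1 : E).

Definition connected_graph : Prop :=
  forall a b : V, exists w, walk_end a w = Some b.

(* Points of the metric graph G: vertices, and interior points of edges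
   (GEdge e t is the point at coordinate t of edge e, 0 < t < len e). *)
Inductive gpt := GVert of V | GEdge of E & R.

Definition is_pt (p : gpt) : Prop :=
  if p is GEdge e t then 0 < t < len e else True.

Definition vdist (a b : V) : R :=
  inf [set l | exists w, walk_end a w = Some b /\ l = walk_len w].

(* (a, o) is an exit vertex of the point p at distance o along its edge. *)
Definition anchor (p : gpt) (a : V) (o : R) : Prop :=
  match p with
  | GVert v => a = v /\ o = 0
  | GEdge e t => (a = src e /\ o = t) \/ (a = tgt e /\ o = len e - t)
  end.

Definition gdist (p q : gpt) : R :=
  inf [set l | (exists e t s, p = GEdge e t /\ q = GEdge e s /\ l = `|t - s|)
            \/ (exists a oa b ob, anchor p a oa /\ anchor q b ob /\
                                  l = oa + vdist a b + ob)].

Definition bnd_pt (B : set V) (p : gpt) : Prop :=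
  exists v, p = GVert v /\ B v.

Section Completion.
Variable X : pseudoMetricType R.
Variable emb : gpt -> X.

Definition is_metric_completion : Prop :=
  [/\ hausdorff_space X,
      (forall F : set_system X, ProperFilter F -> cauchy F -> exists x : X, F --> x),
      dense (emb @` is_pt) &
      forall p q (r : R), is_pt p -> is_pt q -> 0 < r ->
        (gdist p q < r -> ball (emb p) r (emb q)) /\
        (ball (emb p) r (emb q) -> gdist p q <= r)].

Definition bndG (B : set V) : set X :=
  ~` [set emb p | p in [set p | is_pt p /\ ~ bnd_pt B p]].

Definition fv (f : X -> R) (v : V) : R := f (emb (GVert v)).
Definition slope (f : X -> R) (e : E) : R :=
  (fv f (tgt e) - fv f (src e)) / len e.

(* The outward normal derivative
   into e at v of the linear function f_e is slope f e if v is the src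
   endpoint of e, and - slope f e if v is the tgt endpoint (both for a loop). *)
Definition mg_harmonic (B : set V) (f : X -> R) : Prop :=
  [/\ continuous f,
      (forall (e : E) t, 0 < t < len e ->
         f (emb (GEdge e t)) = fv f (src e) + t / len e *
                                (fv f (tgt e) - fv f (src e))) &
      forall v, ~ B v ->
        \sum_(e \in incident v)
           ((if src e == v then slope f e else 0) +
            (if tgt e == v then - slope f e else 0)) = 0].

Definition mg_critical_point (f : X -> R) (p : gpt) : Prop :=
  is_pt p /\
  match p with
  | GVert _ => True
  | GEdge e t => derive1 (fun s => f (emb (GEdge e s))) t = 0
  end.

Definition mg_critical_value (f : X -> R) (c : R) : Prop :=
  exists p, mg_critical_point f p /\ f (emb p) = c.

Definition mg_regular_value (f : X -> R) (c : R) : Prop :=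
  (exists y : X, f y = c) /\ ~ mg_critical_value f c.

End Completion.
End MetricGraph.

From HB Require Import structures.
From mathcomp Require Import all_boot all_order all_algebra.
From mathcomp Require Import all_classical all_reals all_analysis.
Set Implicit Arguments. Unset Strict Implicit. Unset Printing Implicit Defensive.
Import Order.TTheory GRing.Theory Num.Theory.
Import numFieldNormedType.Exports.
Local Open Scope classical_set_scope.
Local Open Scope ring_scope.

(* A point of the level set f = c lies in the metric graph itself, since it
   avoids the boundary; it is not a vertex, since c is a regular value; so it
   is an interior point of an edge on which f is affine, with a nonzero slope
   because a zero slope would make the point critical.  A geodesic ball around
   it, of radius smaller than its distance to the ends of the edge, stays in
   that edge, where f takes the value c only once.  Hence every level point is
   isolated; away from the level set, continuity of f gives a neighbourhood
   free of level points.  A subset of a compact space without accumulation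
   points is finite. *)

Section CofiniteFilter.
Variables (T : Type) (S : set T).

Definition cofinite_on : set_system T := [set A | finite_set (S `\` A)].

Lemma cofinite_on_proper : infinite_set S -> ProperFilter cofinite_on.
Proof.
move=> S_infinite; split; first by rewrite /cofinite_on /= setD0.
split=> [|A B|A B AB]; rewrite /cofinite_on /=.
- by rewrite setDT; exact: finite_set0.
- by move=> fin_A fin_B; rewrite setDIr finite_setU.
- by apply: sub_finite_set => x [Sx nBx]; split=> // /AB.
Qed.

End CofiniteFilter.

(* If S were infinite, a cluster point of its cofinite filter would be an
   accumulation point of S. *)
Lemma compact_discrete_finite (T : topologicalType) (S : set T) :
  compact [set: T] -> (forall x, \forall y \near x, S y -> y = x) ->
  finite_set S.
Proof.
move=> T_compact S_discrete; apply: contrapT => S_infinite.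
have cofinite_proper := cofinite_on_proper S_infinite.
have [x [_ x_cluster]] := T_compact _ cofinite_proper filterT.
have S_minus_x : cofinite_on S (S `\ x).
  by apply: sub_finite_set (finite_set1 x) => y [Sy /not_andP[//|/contrapT]].
by have [y [[Sy yNx] /(_ Sy)]] := x_cluster _ _ S_minus_x (S_discrete x).
Qed.

Section GeodesicDistance.
Variables (R : realType) (G : mgraph R).
Hypothesis len_gt0 : pos_lengths G.

Lemma vdist_ge0 (a b : vert G) : 0 <= vdist a b.
Proof.
rewrite /vdist; set W := [set l | _].
have [->|/set0P W_neq0] := eqVneq W set0; first by rewrite inf0.
apply: lb_le_inf => // _ [w [_ ->]].
by apply: sumr_ge0 => p _; exact/ltW/len_gt0.
Qed.

Lemma anchor_ge0 (p : gpt G) a o : is_pt p -> anchor p a o -> 0 <= o.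
Proof.
case: p => [v _ [_ ->] // | e t /andP[t_gt0 t_lt] [[_ ->]|[_ ->]]].
  exact: ltW.
by rewrite subr_ge0 ltW.
Qed.

Lemma exists_anchor (p : gpt G) : exists a o, anchor p a o.
Proof. by case: p => [v|e t]; [exists v, 0 | exists (src e), t; left]. Qed.

Lemma gdist_edge_lt (e : edge G) t (q : gpt G) :
  is_pt q -> gdist (GEdge e t) q < Num.min t (len e - t) ->
  exists s, q = GEdge e s.
Proof.
move=> q_pt; set m := Num.min t (len e - t).
have [b [ob q_b]] := exists_anchor q.
case/inf_lt.
  exists (t + vdist (src e) b + ob); right.
  by exists (src e), t, b, ob; split=> //; left.
move=> l [[e' [t' [s [[<- _] [-> _]]]]] _|[a [oa [b' [ob' [p_a [q_b' ->]]]]]]].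
  by exists s.
have m_le_oa : m <= oa by case: p_a => -[_ ->]; rewrite ge_min lexx ?orbT.
have vdist_ab'_ge0 := vdist_ge0 a b'; have ob'_ge0 := anchor_ge0 q_pt q_b'.
have : m <= oa + vdist a b' + ob'.
  by rewrite (le_trans m_le_oa) // -addrA lerDl addr_ge0.
by rewrite leNgt => /negP.
Qed.

End GeodesicDistance.

Section HarmonicOnEdges.
Variables (R : realType) (G : mgraph R) (B : set (vert G)).
Variables (X : pseudoMetricType R) (emb : gpt G -> X) (f : X -> R).
Hypothesis len_gt0 : pos_lengths G.
Hypothesis f_harmonic : mg_harmonic emb B f.

Let f_edge (e : edge G) t : 0 < t < len e ->
  f (emb (GEdge e t)) =
  fv emb f (src e) + t / len e * (fv emb f (tgt e) - fv emb f (src e)).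
Proof. by case: f_harmonic => _ + _; apply. Qed.

Lemma regular_edge_nonconstant c e t :
  ~ mg_critical_value emb f c -> 0 < t < len e -> f (emb (GEdge e t)) = c ->
  fv emb f (src e) != fv emb f (tgt e).
Proof.
move=> c_regular t_in ftc; apply/eqP => f_ends; apply: c_regular.
exists (GEdge e t); split=> //; split=> //=.
rewrite derive1E (@near_eq_derive _ _ _ _ (cst (fv emb f (src e)))) ?derive_cst //.
near=> s.
have : s \in `]0, len e[ by near: s; apply: near_in_itvoo; rewrite in_itv.
by rewrite in_itv => s_in; rewrite f_edge // f_ends subrr mulr0 addr0.
Unshelve. all: by end_near.
Qed.

Lemma edge_value_inj e s t :
  fv emb f (src e) != fv emb f (tgt e) -> 0 < s < len e -> 0 < t < len e ->
  f (emb (GEdge e s)) = f (emb (GEdge e t)) -> s = t.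
Proof.
move=> f_ends s_in t_in; rewrite !f_edge // => /addrI /mulIf.
rewrite subr_eq0 eq_sym => /(_ f_ends) /mulIf; apply.
by rewrite invr_eq0 gt_eqF.
Qed.

End HarmonicOnEdges.

Section RegularLevelSet.
Variables (R : realType) (G : mgraph R) (B : set (vert G)).
Variables (X : pseudoMetricType R) (emb : gpt G -> X) (f : X -> R) (c : R).
Hypothesis len_gt0 : pos_lengths G.
Hypothesis emb_completion : is_metric_completion emb.
Hypothesis f_harmonic : mg_harmonic emb B f.
Hypothesis c_regular : ~ mg_critical_value emb f c.
Hypothesis level_off_bnd : ~ (exists x, bndG emb B x /\ f x = c).

Let level_pt x : f x = c -> exists2 p, is_pt p & x = emb p.
Proof.
move=> fxc; have : ~ bndG emb B x by move=> x_bnd; apply: level_off_bnd; exists x.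
by move/contrapT => [p [p_pt _] <-]; exists p.
Qed.

Lemma regular_level_isolated x : f x = c -> \forall y \near x, f y = c -> y = x.
Proof.
move=> fxc; have [[v _|e t t_in] x_emb] := level_pt fxc.
  by case: c_regular; exists (GVert v); rewrite -x_emb.
subst x; set m := Num.min t (len e - t).
have m_gt0 : 0 < m by case/andP: t_in => t_gt0 t_lt; rewrite lt_min t_gt0 subr_gt0.
(* balls of the completion only bound gdist non-strictly, hence radius m / 2 *)
have m2_gt0 : 0 < m / 2 by rewrite divr_gt0.
have m2_lt_m : m / 2 < m by rewrite ltr_pdivrMr // ltr_pMr // ltr1n.
apply: filterS (nbhsx_ballx _ _ m2_gt0) => y near_y fyc.
have [q q_pt y_emb] := level_pt fyc; subst y.
have [_ _ _ /(_ _ _ _ t_in q_pt m2_gt0) [_ /(_ near_y) le_gdist]] := emb_completion.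
have [s q_e] := gdist_edge_lt len_gt0 q_pt (le_lt_trans le_gdist m2_lt_m).
subst q; congr (emb (GEdge e _)).
apply: (edge_value_inj len_gt0 f_harmonic _ q_pt t_in); last by rewrite fyc fxc.
exact: (regular_edge_nonconstant f_harmonic c_regular t_in fxc).
Qed.

End RegularLevelSet.

Theorem lemma3p8 (R : realType) (G : mgraph R) (B : set (vert G))
  (X : pseudoMetricType R) (emb : gpt G -> X) (f : X -> R) (c : R) :
  connected_graph G -> locally_finite G -> pos_lengths G ->
  (forall v, mg_degree v = 1%N -> B v) ->
  is_metric_completion emb ->
  compact [set: X] ->
  totally_disconnected (bndG emb B) ->
  mg_harmonic emb B f ->
  mg_regular_value emb f c ->
  ~ (exists x, bndG emb B x /\ f x = c) ->
  finite_set (f @^-1` [set c]).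
Proof.
move=> _ _ len_gt0 _ emb_completion X_compact _ f_harmonic [_ c_regular] level_off_bnd.
apply: compact_discrete_finite X_compact _ => x.
have [fxc|fxNc] := pselect (f x = c).
  exact: (regular_level_isolated len_gt0 emb_completion f_harmonic c_regular
                                 level_off_bnd fxc).
have [f_cont _ _] := f_harmonic.
have x_nbhs : open_nbhs x (f @^-1` ~` [set c]).
  split=> //; apply: open_comp => [z _|]; first exact: f_cont.
  by rewrite openC; exact: closed_eq.
by apply: filterS (open_nbhs_nbhs x_nbhs) => y fyNc /fyNc.
Qed.
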